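(* Let $(G,c)$ be a W-state graph, and let $X$ and $X'$ be the vertex sets of the two connected components of the spanning subgraph $G_m=(V(G),E_m(G))$ of monochromatic edges. If $|X|=1$ or $|X'|=1$, then $(G,c)$ is a W-cone.
   Context: Graphs may have parallel edges but no loops. A half-edge $2$-colouring $c$ of $G$ assigns to each pair $(e,w)$ with $w$ an endpoint of edge $e$ a colour in $\{0,1\}$ (0 = blue, 1 = red). An edge $e=uv$ is bichromatic if $c(e,u)\neq c(e,v)$ and monochromatic otherwise; $E_m(G)$, $E_b(G)$ denote the monochromatic and bichromatic edge sets; standing convention: monochromatic edges are blue at both ends. A graph is matching-covered if every edge lies in some perfect matching. A W-state graph is a half-edge $2$-coloured matching-covered graph $(G,c)$ in which every perfect matching contains exactly one bichromatic edge, and every vertex $v$ is incident with an edge $e$ with $c(e,v)=1$. For any W-state graph, $G_m$ has exactly two connected components. A W-cone is a half-edge $2$-coloured matching-covered graph $(G,c)$ containing a vertex $v$ adjacent to all other vertices (the apex) such that the set of edges incident with $v$ equals $E_b(G)$, $E(G-v)=E_m(G)$, and every vertex $u$ is incident with an edge $e$ with $c(e,u)=1$. *)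

From mathcomp Require Import all_boot all_order.
Set Implicit Arguments. Unset Strict Implicit. Unset Printing Implicit Defensive.

(* Parallel edges are allowed (distinct edges may have
   the same ends); loops are excluded by the hypothesis [loopless ends].
   A half-edge 2-colouring is [c : E -> V -> bool]; only the values
   [c e w] for w an endpoint of e are meaningful (false = blue, true = red). *)

Section Graphs.
Variables (V E : finType) (ends : E -> V * V) (c : E -> V -> bool).

Definition loopless : Prop := forall e, (ends e).1 != (ends e).2.

Definition incident (e : E) (w : V) : bool :=
  (w == (ends e).1) || (w == (ends e).2).

Definition bichromatic (e : E) : bool := c e (ends e).1 != c e (ends e).2.
Definition monochromatic (e : E) : bool := ~~ bichromatic e.

Definition mono_blue : Prop :=
  forall e, monochromatic e -> c e (ends e).1 = false /\ c e (ends e).2 = false.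

Definition perfect_matching (M : {set E}) : Prop :=
  forall v : V, #|[set e in M | incident e v]| = 1%N.

Definition matching_covered : Prop :=
  forall e : E, exists M : {set E}, perfect_matching M /\ e \in M.

Definition red_at_every_vertex : Prop :=
  forall v : V, exists e : E, incident e v /\ c e v = true.

Definition W_state : Prop :=
  [/\ matching_covered,
      (forall M : {set E}, perfect_matching M ->
         #|[set e in M | bichromatic e]| = 1%N)
    & red_at_every_vertex].

Definition adj_m : rel V := fun u w =>
  [exists e : E, monochromatic e &&
     (((ends e).1 == u) && ((ends e).2 == w) ||
      ((ends e).1 == w) && ((ends e).2 == u))].

Definition comp_m (x : V) : {set V} := [set y | connect adj_m x y].

Definition is_comp_m (X : {set V}) : Prop := exists x : V, X = comp_m x.

Definition adjacent (u w : V) : Prop :=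
  exists e : E, ((ends e).1 == u) && ((ends e).2 == w) ||
                ((ends e).1 == w) && ((ends e).2 == u).

Definition W_cone : Prop :=
  [/\ matching_covered,
      red_at_every_vertex
    & exists v : V,
        [/\ (forall u : V, u != v -> adjacent u v),
            (forall e : E, incident e v = bichromatic e)
          & (forall e : E, ~~ incident e v = monochromatic e)]].

End Graphs.

From mathcomp Require Import all_boot all_order.

(* If a monochromatic component is a single vertex v, every edge at v is
   bichromatic. Each perfect matching covers v by such an edge and contains no
   other bichromatic edge, so, as every edge lies in a perfect matching, the
   bichromatic edges are exactly the edges at v. A vertex u != v carries a red
   half-edge, which cannot belong to a (blue) monochromatic edge; that edge is
   therefore bichromatic and joins u to v. *)

Set Implicit Arguments.
Unset Strict Implicit.
Unset Printing Implicit Defensive.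

Lemma card1_in_eq (T : finType) (A : {pred T}) x y :
  #|A| = 1%N -> x \in A -> y \in A -> x = y.
Proof.
by move=> A1 xA yA; have /card_le1_eqP/(_ y x yA xA) : #|A| <= 1 by rewrite A1.
Qed.

Section WCone.
Variables (V E : finType) (ends : E -> V * V) (c : E -> V -> bool).

Lemma adjacent_incident e u v :
  u != v -> incident ends e u -> incident ends e v -> adjacent ends u v.
Proof.
move=> + eu ev; rewrite /adjacent.
by case/orP: eu => /eqP->; case/orP: ev => /eqP->; rewrite ?eqxx // => _; exists e;
  rewrite !eqxx ?orbT.
Qed.

Lemma adj_m_incident e v :
  loopless ends -> monochromatic ends c e -> incident ends e v ->
  exists2 w, w != v & adj_m ends c v w.
Proof.
move=> noloop mono_e; have ends_neq := noloop e.
case/orP=> /eqP->; [exists (ends e).2; first by rewrite eq_sym | exists (ends e).1 => //];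
  by apply/existsP; exists e; rewrite mono_e !eqxx ?orbT.
Qed.

Lemma comp_m_card1_adj v w :
  #|comp_m ends c v| = 1%N -> adj_m ends c v w -> w = v.
Proof.
move=> v_alone vw; apply: (card1_in_eq v_alone); rewrite inE.
- exact: connect1.
- exact: connect0.
Qed.

Lemma comp_m_card1_bichromatic v e :
  loopless ends -> #|comp_m ends c v| = 1%N ->
  incident ends e v -> bichromatic ends c e.
Proof.
move=> noloop v_alone ev; apply: contraT => mono_e.
have [w neq_wv vw] := adj_m_incident noloop mono_e ev.
by rewrite (comp_m_card1_adj v_alone vw) eqxx in neq_wv.
Qed.

Lemma red_bichromatic e u :
  mono_blue ends c -> incident ends e u -> c e u -> bichromatic ends c e.
Proof.
move=> blue eu red_eu; apply: contraT => mono_e.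
have [blue1 blue2] := blue e mono_e.
by case/orP: eu => /eqP u_end; rewrite u_end ?blue1 ?blue2 in red_eu.
Qed.

Lemma bichromatic_incident v e :
  matching_covered ends ->
  (forall M, perfect_matching ends M -> #|[set f in M | bichromatic ends c f]| = 1%N) ->
  (forall f, incident ends f v -> bichromatic ends c f) ->
  bichromatic ends c e -> incident ends e v.
Proof.
move=> covered one_bichromatic v_bichromatic bi_e.
have [M [pmM eM]] := covered e.
have /card_gt0P[f] : 0 < #|[set f in M | incident ends f v]| by rewrite pmM.
rewrite inE => /andP[fM fv].
suff -> : e = f by [].
by apply: (card1_in_eq (one_bichromatic M pmM)); rewrite inE ?eM ?fM ?bi_e ?v_bichromatic.
Qed.

Lemma W_cone_of_comp_m_card1 v :
  loopless ends -> mono_blue ends c -> W_state ends c ->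
  #|comp_m ends c v| = 1%N -> W_cone ends c.
Proof.
move=> noloop blue [covered one_bichromatic red] v_alone.
have at_v_bi := comp_m_card1_bichromatic noloop v_alone.
have bi_at_v := bichromatic_incident covered one_bichromatic at_v_bi.
have incident_bi e : incident ends e v = bichromatic ends c e.
  by apply/idP/idP; [exact: at_v_bi | exact: bi_at_v].
split=> //; exists v; split=> [u neq_uv | e | e]; last by rewrite incident_bi.
- have [e [eu red_eu]] := red u.
  exact: adjacent_incident neq_uv eu (bi_at_v _ (red_bichromatic blue eu red_eu)).
- exact: incident_bi.
Qed.

End WCone.

Theorem mainTheorem10 (V E : finType) (ends : E -> V * V) (c : E -> V -> bool)
  (X X' : {set V}) :
  loopless ends ->
  mono_blue ends c ->
  W_state ends c ->
  is_comp_m ends c X -> is_comp_m ends c X' -> X != X' ->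
  (#|X| = 1%N \/ #|X'| = 1%N) ->
  W_cone ends c.
Proof.
move=> noloop blue wstate [x ->] [x' ->] _ [x_alone | x'_alone].
- exact: W_cone_of_comp_m_card1 x_alone.
- exact: W_cone_of_comp_m_card1 x'_alone.
Qed.
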